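(* A sticky tree is determined by its underlying plane tree together with its certificate-counting function: if $(T,\ell)$ and $(T,\ell')$ are sticky trees with the same underlying plane tree $T$ and the same certificate-counting function, then $\ell=\ell'$.
   Context: Sticky trees: a plane tree is a rooted tree in which the children of every node are linearly ordered (left to right). The root has depth $0$, a child of a node of depth $d$ has depth $d+1$. The prefix order is: the root, followed by the prefix order of the subtree of its leftmost child, then of its second child, and so on. $S_u$ denotes the subtree rooted at $u$. A sticky tree is a plane tree $S$ with node set $V$ and a labeling $\ell:V\to\mathbb{N}$ such that: (1) every node $u$ of depth $d$ has $0\le\ell(u)\le d$; (2) every node $u$ of depth $d>0$ has some $v\in S_u$ (possibly $v=u$) with $\ell(v)<d$; (3) for every node $u$ of depth $d$, if some $v\in S_u$ has $\ell(v)=d$, then every node of $S_u$ (including $u$) preceding $v$ in prefix order has label at least $d$. The certificate of a non-root node $u$ of depth $d$ is the first node, in prefix order, of $S_u$ whose label is $<d$. The certificate-counting function $c:V\to\mathbb{N}$ assigns to each node $w$ the number of non-root nodes whose certificate is $w$. *)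

From mathcomp Require Import all_boot.
Set Implicit Arguments. Unset Strict Implicit. Unset Printing Implicit Defensive.

Inductive ptree := Node of seq ptree.

(* Nodes are addressed by their path from the root: the list of child
   indices (0 = leftmost child).  The root is [::]; the depth of a node u
   is size u. *)
Definition addr := seq nat.

(* All nodes of a plane tree, listed in prefix order: the root, then the
   prefix order of the subtree of the leftmost child, then the second, ... *)
Fixpoint nodes (t : ptree) : seq addr :=
  match t with
  | Node ts =>
      [::] :: (fix aux (i : nat) (ts : seq ptree) : seq addr :=
                 match ts with
                 | [::] => [::]
                 | t' :: ts' => map (cons i) (nodes t') ++ aux i.+1 ts'
                 end) 0 ts
  end.

Definition in_sub (u v : addr) : bool := prefix u v.

Definition precedes (t : ptree) (v w : addr) : bool :=
  index v (nodes t) < index w (nodes t).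

Definition depth (u : addr) : nat := size u.

Definition sticky (t : ptree) (l : addr -> nat) : Prop :=
  (forall u, u \in nodes t -> l u <= depth u) /\
  (forall u, u \in nodes t -> 0 < depth u ->
     exists v, [/\ v \in nodes t, in_sub u v & l v < depth u]) /\
  (* (3) *)
  (forall u v, u \in nodes t -> v \in nodes t -> in_sub u v ->
     l v = depth u ->
     forall w, w \in nodes t -> in_sub u w -> precedes t w v ->
       depth u <= l w).

Definition certificate (t : ptree) (l : addr -> nat) (u : addr) : addr :=
  head [::] [seq v <- nodes t | in_sub u v && (l v < depth u)].

Definition cert_count (t : ptree) (l : addr -> nat) (w : addr) : nat :=
  count (fun u => (0 < depth u) && (certificate t l u == w)) (nodes t).

From mathcomp Require Import all_boot.
Set Implicit Arguments. Unset Strict Implicit. Unset Printing Implicit Defensive.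

(* Induct along prefix order.  At the first node w where the labelings differ,
   say l w < l' w = b, stickiness of l' (condition (3) at the ancestor u of w
   of depth b) forces every node of S_u before w to carry a label >= b, so w is
   the l-certificate of u but not its l'-certificate.  Every l'-certificate
   pointing to w remains an l-certificate, so w is certified strictly more
   often under l than under l'. *)

Lemma seq_index_ind (T : eqType) (s : seq T) (P : T -> Prop) :
  (forall w, w \in s -> (forall x, x \in s -> index x s < index w s -> P x) -> P w) ->
  forall w, w \in s -> P w.
Proof.
move=> step; suff: forall n w, index w s = n -> w \in s -> P w by move=> H w; exact: H.
elim/ltn_ind=> n IH w index_w ws; apply: step => // x xs lt_xw.
by apply: (IH (index x s)) => //; rewrite -index_w.
Qed.

Lemma head_filterP (T : eqType) (x0 w : T) (P : pred T) (s : seq T) :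
  w != x0 -> w \in s ->
  head x0 (filter P s) = w <->
  P w /\ forall x, x \in s -> index x s < index w s -> ~~ P x.
Proof.
move=> w_x0; have head_P s' : head x0 (filter P s') = w -> P w.
  case def_s': (filter P s') => [|z s''] /= zw; first by rewrite zw eqxx in w_x0.
  by have := mem_head z s''; rewrite -def_s' zw mem_filter => /andP[].
elim: s => [|y s IH] //= ws.
case: (eqVneq y w) => [->|y_w].
  case Pw: (P w) => /=; first by split=> // _; rewrite eqxx.
  by split=> [/head_P | []] //; rewrite Pw.
have {}ws : w \in s by move: ws; rewrite in_cons eq_sym (negbTE y_w).
case Py: (P y) => /=.
  split=> [yw | [_ /(_ y (mem_head _ _))]]; first by rewrite yw eqxx in y_w.
  by rewrite /= eqxx Py => /(_ isT).
apply: iff_trans (IH ws) _; split=> -[Pw before_w]; split=> // x.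
  rewrite in_cons => /orP[/eqP -> | xs]; first by rewrite Py.
  case: eqP => [<- | _]; [by rewrite Py | exact: before_w].
move=> xs lt_xw; apply: before_w; first by rewrite in_cons xs orbT.
by case: eqP.
Qed.

Lemma count_lt_subpred (T : eqType) (s : seq T) (P P' : pred T) :
  {in s, subpred P' P} -> (exists2 x, x \in s & P x && ~~ P' x) ->
  count P' s < count P s.
Proof.
move=> sub [x xs /andP[Px nP'x]].
have -> : count P' s = count P' (filter P s).
  rewrite count_filter; apply: eq_in_count => y ys /=.
  by case: (boolP (P' y)) => //= /(sub y ys) ->.
rewrite -(size_filter P) -(count_predC P' (filter P s)) -ltn_subLR ?subnn //.
by rewrite -has_count; apply/hasP; exists x; rewrite ?mem_filter ?Px.
Qed.

Fixpoint forest_nodes (i : nat) (ts : seq ptree) : seq addr :=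
  match ts with
  | [::] => [::]
  | t' :: ts' => map (cons i) (nodes t') ++ forest_nodes i.+1 ts'
  end.

Lemma nodesE (ts : seq ptree) : nodes (Node ts) = [::] :: forest_nodes 0 ts.
Proof. by []. Qed.

Lemma mem_map_cons (T : eqType) (i c : T) (w : seq T) (s : seq (seq T)) :
  (c :: w \in map (cons i) s) = (c == i) && (w \in s).
Proof.
apply/mapP/andP => [[x xs [-> ->]] | [/eqP -> ws]]; first by [].
by exists w.
Qed.

Lemma mem_forest_nodes (i c : nat) (ts : seq ptree) (w : addr) :
  (c :: w \in forest_nodes i ts) =
  [&& i <= c, c - i < size ts & w \in nodes (nth (Node [::]) ts (c - i))].
Proof.
elim: ts i => [|t' ts IH] i /=; first by rewrite andbF.
rewrite mem_cat mem_map_cons IH.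
case: (ltngtP c i) => [// | lt_ic | ->]; last by rewrite subnn /= orbF.
by rewrite -(subnSK lt_ic).
Qed.

Lemma mem_nodes_cons (ts : seq ptree) (c : nat) (w : addr) :
  (c :: w \in nodes (Node ts)) = (c < size ts) && (w \in nodes (nth (Node [::]) ts c)).
Proof. by rewrite nodesE in_cons mem_forest_nodes subn0. Qed.

Lemma nodes_take (t : ptree) (k : nat) (w : addr) :
  w \in nodes t -> take k w \in nodes t.
Proof.
elim: w t k => [|c w IH] [ts] [|k] //; rewrite ?take0 ?nodesE ?mem_head //.
by rewrite -!nodesE /= !mem_nodes_cons => /andP[-> /IH ->].
Qed.

(* [w != [::]] rules out the default value of [head]: the root is never a
   certificate. *)
Lemma certificateP (t : ptree) (l : addr -> nat) (u w : addr) :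
  w != [::] -> w \in nodes t ->
  certificate t l u = w <->
  [/\ in_sub u w, l w < depth u &
      forall x, x \in nodes t -> precedes t x w -> in_sub u x -> depth u <= l x].
Proof.
move=> w_root ws; apply: iff_trans (head_filterP _ w_root ws) _.
split=> [[/andP[uw lw] before_w] | [uw lw before_w]].
  split=> // x xs lt_xw ux.
  by move: (before_w x xs lt_xw); rewrite ux /= -leqNgt.
split=> [|x xs lt_xw]; first by rewrite uw lw.
by rewrite negb_and -leqNgt; case: (boolP (in_sub u x)) => //= /(before_w x xs lt_xw).
Qed.

Section FirstDisagreement.

Variables (t : ptree) (l l' : addr -> nat) (w : addr).
Hypotheses (sticky_l' : sticky t l') (ws : w \in nodes t).
Hypothesis agree_before : forall x, x \in nodes t -> precedes t x w -> l x = l' x.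
Hypothesis lt_w : l w < l' w.

Let b := l' w.
Let u := take b w.

Lemma label'_le_depth : b <= depth w.
Proof. by case: sticky_l' => label_le _; exact: label_le. Qed.

Lemma depth_ancestor : depth u = b.
Proof. by rewrite /depth size_takel // label'_le_depth. Qed.

Lemma w_not_root : w != [::].
Proof.
apply/eqP=> w_nil; move: label'_le_depth lt_w.
by rewrite /b /depth w_nil leqn0 => /eqP ->.
Qed.

Lemma certificate'_certificate (v : addr) :
  certificate t l' v = w -> certificate t l v = w.
Proof.
move=> /(certificateP _ _ w_not_root ws)[vw l'w before_w].
apply/(certificateP _ _ w_not_root ws); split=> //; first exact: ltn_trans l'w.
by move=> x xs lt_xw vx; rewrite agree_before //; exact: before_w.
Qed.

Lemma certificate_ancestor : certificate t l u = w.
Proof.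
case: sticky_l' => _ [_ sticky3].
apply/(certificateP _ _ w_not_root ws); rewrite depth_ancestor; split=> //.
  exact: prefix_take.
move=> x xs lt_xw ux; rewrite agree_before //.
have := sticky3 u w (nodes_take b ws) ws (prefix_take _ _) (esym depth_ancestor)
  x xs ux lt_xw.
by rewrite depth_ancestor.
Qed.

Lemma certificate'_ancestor_neq : certificate t l' u != w.
Proof.
apply/eqP=> /(certificateP _ _ w_not_root ws)[_].
by rewrite depth_ancestor ltnn.
Qed.

Lemma cert_count_lt : cert_count t l' w < cert_count t l w.
Proof.
apply: count_lt_subpred => [v _ /andP[-> /eqP /certificate'_certificate ->] | ].
  exact: eqxx.
exists u; first exact: nodes_take.
rewrite depth_ancestor (leq_ltn_trans (leq0n _) lt_w) certificate_ancestor eqxx.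
by rewrite certificate'_ancestor_neq.
Qed.

End FirstDisagreement.

Theorem corollary4p4 (t : ptree) (l l' : addr -> nat) :
  sticky t l -> sticky t l' ->
  (forall w, w \in nodes t -> cert_count t l w = cert_count t l' w) ->
  forall u, u \in nodes t -> l u = l' u.
Proof.
move=> sticky_l sticky_l' same_count; apply: seq_index_ind => w ws agree.
case: (ltngtP (l w) (l' w)) => // [lt_w | lt_w'].
  by have := cert_count_lt sticky_l' ws agree lt_w; rewrite same_count ?ltnn.
have agree' x : x \in nodes t -> precedes t x w -> l' x = l x.
  by move=> xs lt_xw; rewrite agree.
by have := cert_count_lt sticky_l ws agree' lt_w'; rewrite same_count ?ltnn.
Qed.
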